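(* Neither the VCCR $scwc$ nor the VSCC $\overline{scwc}$ satisfies Coherent IIA.
   Context: Profiles: $\mathbf P:V\to\mathcal L(X)$, $V$ nonempty finite set of voters, $X=X(\mathbf P)$ nonempty finite set of candidates, $\mathcal L(X)$ strict linear orders; $\mathbf P_{|Y}$ restricts each ballot to $Y$. $\mathrm{Margin}_{\mathbf P}(x,y)$ = #voters ranking $x$ above $y$ minus #ranking $y$ above $x$. $\mathcal M(\mathbf P)$: directed graph on $X(\mathbf P)$ with edge $x\to y$ of weight $\mathrm{Margin}_{\mathbf P}(x,y)$ when positive. Majority path: sequence with positive consecutive margins; strength = minimum. $(x,y)\in sc(\mathbf P)$ iff $\mathrm{Margin}_{\mathbf P}(x,y)>0$ exceeds the strength of every majority path from $y$ to $x$; $(x,y)\in wc(\mathbf P)$ iff $\mathrm{Margin}_{\mathbf P}(x,y)>0$ and $\mathrm{Margin}_{\mathbf P}(x,z)\ge\mathrm{Margin}_{\mathbf P}(y,z)$ for all $z$; $scwc(\mathbf P)=sc(\mathbf P)\cup wc(\mathbf P)$; $\overline{scwc}(\mathbf P)$ is the set of candidates not defeated in $scwc(\mathbf P)$. Write $\mathbf P\rightsquigarrow_{x,y}\mathbf P'$ if $\mathbf P_{|\{x,y\}}=\mathbf P'_{|\{x,y\}}$ and $\mathcal M(\mathbf P')$ is obtainable from $\mathcal M(\mathbf P)$ by deleting zero or more candidates other than $x,y$ and deleting or reducing weights of zero or more edges not connecting $x$ and $y$. A VCCR $f$ satisfies Coherent IIA if $(x,y)\in f(\mathbf P)$ and $\mathbf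 P\rightsquigarrow_{x,y}\mathbf P'$ imply $(x,y)\in f(\mathbf P')$. A VSCC $F$ satisfies Coherent IIA if for every $\mathbf P$ and $y\notin F(\mathbf P)$ there is $x\in X(\mathbf P)$ with $y\notin F(\mathbf P')$ for all $\mathbf P'$ with $\mathbf P\rightsquigarrow_{x,y}\mathbf P'$. *)

From mathcomp Require Import all_boot all_order all_algebra.
Set Implicit Arguments. Unset Strict Implicit. Unset Printing Implicit Defensive.
Import Order.TTheory GRing.Theory Num.Theory.
Local Open Scope ring_scope.

(* A profile: nonempty finite voter set V, nonempty finite candidate set X,
   and for every voter a strict linear order on X.
   [ballot P i a b] means voter i ranks a above b (only meaningful on V x X x X). *)
Record profile := Profile {
  voters : seq nat;
  cands : seq nat;
  ballot : nat -> rel nat;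
  voters_uniq : uniq voters;
  voters_nonempty : voters != [::];
  cands_uniq : uniq cands;
  cands_nonempty : cands != [::];
  ballot_irr : forall i a, i \in voters -> a \in cands -> ~~ ballot i a a;
  ballot_trans : forall i a b c, i \in voters -> a \in cands -> b \in cands ->
     c \in cands -> ballot i a b -> ballot i b c -> ballot i a c;
  ballot_total : forall i a b, i \in voters -> a \in cands -> b \in cands ->
     a != b -> ballot i a b || ballot i b a
}.

(* Margin_P(a,b) (set to 0 when a or b is not a candidate of P). *)
Definition margin (P : profile) (a b : nat) : int :=
  if (a \in cands P) && (b \in cands P) then
    (count (fun i => ballot P i a b) (voters P))%:Z
    - (count (fun i => ballot P i b a) (voters P))%:Z
  else 0.

(* A majority path a = a_0, a_1, ..., a_n = b (n >= 1) given as a :: s. *)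
Definition majority_path (P : profile) (a : nat) (s : seq nat) (b : nat) : Prop :=
  [/\ a \in cands P, all (fun c => c \in cands P) s,
      path (fun u v => 0 < margin P u v) a s, s != [::] & last a s = b].

Definition strength (P : profile) (a : nat) (s : seq nat) : int :=
  let ms := pairmap (margin P) a s in foldr Num.min (head 0 ms) ms.

Definition sc (P : profile) (x y : nat) : Prop :=
  0 < margin P x y /\
  forall s, majority_path P y s x -> strength P y s < margin P x y.

Definition wc (P : profile) (x y : nat) : Prop :=
  0 < margin P x y /\
  forall z, z \in cands P -> margin P y z <= margin P x z.

Definition scwc (P : profile) (x y : nat) : Prop := sc P x y \/ wc P x y.

Definition scwc_bar (P : profile) (y : nat) : Prop :=
  y \in cands P /\ ~ (exists x, scwc P x y).

Definition restr_eq (P P' : profile) (x y : nat) : Prop :=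
  [/\ voters P =i voters P',
      (x \in cands P) = (x \in cands P'),
      (y \in cands P) = (y \in cands P') &
      forall i a b, i \in voters P -> a \in [:: x; y] -> b \in [:: x; y] ->
        a \in cands P -> b \in cands P -> ballot P i a b = ballot P' i a b].

(* M(P') obtained from M(P) by deleting candidates other than x, y and deleting
   or reducing weights of edges not connecting x and y. *)
Definition graph_obtainable (P P' : profile) (x y : nat) : Prop :=
  [/\ {subset cands P' <= cands P},
      margin P' x y = margin P x y,
      margin P' y x = margin P y x &
      forall a b, 0 < margin P' a b -> margin P' a b <= margin P a b].

Definition transition (P : profile) (x y : nat) (P' : profile) : Prop :=
  restr_eq P P' x y /\ graph_obtainable P P' x y.

Definition VCCR := profile -> nat -> nat -> Prop.
Definition VSCC := profile -> nat -> Prop.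

Definition coherent_IIA_VCCR (f : VCCR) : Prop :=
  forall P P' x y, f P x y -> transition P x y P' -> f P' x y.

Definition coherent_IIA_VSCC (F : VSCC) : Prop :=
  forall P y, y \in cands P -> ~ F P y ->
    exists x, x \in cands P /\
      forall P', transition P x y P' -> ~ F P' y.

(* Let P0 be the 12-voter profile below on candidates 0, 1, 2, 3, whose majority graph
   has the weight-2 edges 0->1, 0->3, 1->3, 2->0, 2->1 and 3->2.  Candidate 0 defeats 1
   in wc (though not in sc, because of the path 1->3->2->0).  Letting voter 10 swap 2
   and 1 deletes the edge 2->1 without touching {0, 1}; then 0 no longer dominates 1 at
   2, so scwc loses the pair (0, 1) and 1 becomes undefeated.  For the VSCC, each
   potential culprit x of the defeat of 1 is answered by a profile P0 ~>_{x,1} P' in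
   which 1 is undefeated: the one above for x = 0, and for x = 1, 2, 3 the restriction
   of P0 to {1}, to the 3-cycle {1, 2, 3}, and to {1, 3} respectively. *)
From mathcomp Require Import all_boot all_order all_algebra.
Set Implicit Arguments. Unset Strict Implicit. Unset Printing Implicit Defensive.
Import Order.TTheory GRing.Theory Num.Theory.
Local Open Scope ring_scope.

Definition rank_ballot (r : nat -> seq nat) (i : nat) : rel nat :=
  fun a b => (index a (r i) < index b (r i))%N.

Section RankingProfile.
Variables (V X : seq nat) (r : nat -> seq nat).
Hypothesis r_complete : all (fun i => all (fun a => a \in r i) X) V.

Lemma rank_ballot_irr i a : i \in V -> a \in X -> ~~ rank_ballot r i a a.
Proof. by move=> _ _; rewrite /rank_ballot ltnn. Qed.

Lemma rank_ballot_trans i a b c : i \in V -> a \in X -> b \in X -> c \in X ->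
  rank_ballot r i a b -> rank_ballot r i b c -> rank_ballot r i a c.
Proof. by move=> _ _ _ _; apply: ltn_trans. Qed.

Lemma rank_ballot_total i a b : i \in V -> a \in X -> b \in X ->
  a != b -> rank_ballot r i a b || rank_ballot r i b a.
Proof.
move=> iV aX bX; apply: contraNT; rewrite negb_or -leqNgt -ltnNge -eqn_leq.
have /allP Xr := allP r_complete i iV.
by move/eqP/(congr1 (nth 0 (r i))); rewrite !nth_index ?Xr // => ->.
Qed.

Definition ranking_profile (V_uniq : uniq V) (V_nonempty : V != [::])
    (X_uniq : uniq X) (X_nonempty : X != [::]) : profile :=
  Profile V_uniq V_nonempty X_uniq X_nonempty rank_ballot_irr rank_ballot_trans
    rank_ballot_total.

End RankingProfile.

Lemma margin_gt0_cands P a b : 0 < margin P a b -> (a \in cands P) && (b \in cands P).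
Proof. by rewrite /margin; case: ifP => //; rewrite ltxx. Qed.

Lemma scwc_margin_gt0 P x y : scwc P x y -> 0 < margin P x y.
Proof. by case=> -[]. Qed.

Lemma majority_pathP P a s b :
  reflect (majority_path P a s b)
    [&& a \in cands P, all (fun c => c \in cands P) s,
        path (fun u v => 0 < margin P u v) a s, s != [::] & last a s == b].
Proof. by apply: (iffP and5P) => -[? ? ? ? /eqP ?]. Qed.

Lemma wcP P x y :
  reflect (wc P x y)
    ((0 < margin P x y) && all (fun z => margin P y z <= margin P x z) (cands P)).
Proof. by apply: (iffP andP) => -[? /allP ?]. Qed.

Lemma not_scwc P x y s z :
  majority_path P y s x -> margin P x y <= strength P y s ->
  z \in cands P -> margin P x z < margin P y z -> ~ scwc P x y.
Proof.
move=> yx_path weak_xy zP yz_gt [[_ /(_ s yx_path)] | [_ /(_ z zP)]].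
  by rewrite ltNge weak_xy.
by rewrite leNgt yz_gt.
Qed.

Definition majority_beaters (P : profile) (y : nat) : seq nat :=
  [seq x <- cands P | 0 < margin P x y].

Lemma scwc_barW P y : y \in cands P ->
  {in majority_beaters P y, forall x, ~ scwc P x y} -> scwc_bar P y.
Proof.
move=> yP not_beaten; split=> // -[x xy]; apply: (not_beaten x) => //.
have xy_gt0 := scwc_margin_gt0 xy.
by case/andP: (margin_gt0_cands xy_gt0) => xP _; rewrite mem_filter xy_gt0.
Qed.

Lemma transitionW P x y P' :
  [&& voters P == voters P', (x \in cands P) == (x \in cands P'),
      (y \in cands P) == (y \in cands P') &
      all (fun i => all (fun a => all (fun b => ballot P i a b == ballot P' i a b)
         [:: x; y]) [:: x; y]) (voters P)] ->
  [&& all (fun a => a \in cands P) (cands P'), margin P' x y == margin P x y,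
      margin P' y x == margin P y x &
      all (fun a => all (fun b => (0 < margin P' a b) ==> (margin P' a b <= margin P a b))
         (cands P')) (cands P')] ->
  transition P x y P'.
Proof.
case/and4P=> /eqP same_voters /eqP xP /eqP yP /allP agree.
case/and4P=> /allP sub /eqP xy /eqP yx /allP weaker; split.
  split=> [i | | | i a b iP aP bP _ _] //; first by rewrite same_voters.
  exact/eqP/(allP (allP (agree i iP) a aP) b bP).
split=> // a b ab_gt0; case/andP: (margin_gt0_cands ab_gt0) => aP' bP'.
by have /implyP := allP (weaker a aP') b bP'; apply.
Qed.

Lemma not_coherent_IIA_VSCC (F : VSCC) P y : y \in cands P -> ~ F P y ->
  (forall x, x \in cands P -> exists2 P', transition P x y P' & F P' y) ->
  ~ coherent_IIA_VSCC F.
Proof.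
move=> yP notFy escape /(_ P y yP notFy) [x [xP stays_out]].
by have [P' PP' FP'] := escape x xP; apply: stays_out PP' FP'.
Qed.

Definition rankings0 : seq (seq nat) :=
  [:: [:: 0; 1; 2; 3]; [:: 3; 2; 0; 1]; [:: 0; 3; 1; 2]; [:: 2; 1; 0; 3];
      [:: 1; 3; 0; 2]; [:: 2; 0; 1; 3]; [:: 3; 2; 0; 1]; [:: 1; 0; 3; 2];
      [:: 2; 0; 1; 3]; [:: 3; 1; 2; 0]; [:: 2; 1; 0; 3]; [:: 3; 0; 2; 1]]%N.

Definition rankings1 : seq (seq nat) := set_nth [::] rankings0 10 [:: 1; 2; 0; 3]%N.

Definition P0 : profile :=
  @ranking_profile (iota 0 12) [:: 0; 1; 2; 3]%N (nth [::] rankings0)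
    erefl erefl erefl erefl erefl.
Definition P1 : profile :=
  @ranking_profile (iota 0 12) [:: 0; 1; 2; 3]%N (nth [::] rankings1)
    erefl erefl erefl erefl erefl.
Definition P0_on123 : profile :=
  @ranking_profile (iota 0 12) [:: 1; 2; 3]%N (nth [::] rankings0)
    erefl erefl erefl erefl erefl.
Definition P0_on13 : profile :=
  @ranking_profile (iota 0 12) [:: 1; 3]%N (nth [::] rankings0)
    erefl erefl erefl erefl erefl.
Definition P0_on1 : profile :=
  @ranking_profile (iota 0 12) [:: 1]%N (nth [::] rankings0)
    erefl erefl erefl erefl erefl.

Lemma wc_P0 : wc P0 0 1.
Proof. by apply/wcP; vm_compute. Qed.

Lemma not_scwc_P1 : ~ scwc P1 0 1.
Proof.
apply: (@not_scwc _ _ _ [:: 3; 2; 0]%N 2); first apply/majority_pathP; by vm_compute.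
Qed.

Lemma not_scwc_P0_on123 : ~ scwc P0_on123 2 1.
Proof.
apply: (@not_scwc _ _ _ [:: 3; 2]%N 3); first apply/majority_pathP; by vm_compute.
Qed.

Lemma scwc_bar_P1 : scwc_bar P1 1.
Proof.
apply: scwc_barW => //; have -> : majority_beaters P1 1 = [:: 0]%N by vm_compute.
by move=> x; rewrite inE => /eqP->; apply: not_scwc_P1.
Qed.

Lemma scwc_bar_P0_on123 : scwc_bar P0_on123 1.
Proof.
apply: scwc_barW => //; have -> : majority_beaters P0_on123 1 = [:: 2]%N by vm_compute.
by move=> x; rewrite inE => /eqP->; apply: not_scwc_P0_on123.
Qed.

Lemma scwc_bar_P0_on13 : scwc_bar P0_on13 1.
Proof.
by apply: scwc_barW => //; have -> : majority_beaters P0_on13 1 = [::] by vm_compute.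
Qed.

Lemma scwc_bar_P0_on1 : scwc_bar P0_on1 1.
Proof.
by apply: scwc_barW => //; have -> : majority_beaters P0_on1 1 = [::] by vm_compute.
Qed.

Lemma transition_P0_P1 : transition P0 0 1 P1.
Proof. by apply: transitionW; vm_compute. Qed.

Lemma transition_P0_on123 : transition P0 2 1 P0_on123.
Proof. by apply: transitionW; vm_compute. Qed.

Lemma transition_P0_on13 : transition P0 3 1 P0_on13.
Proof. by apply: transitionW; vm_compute. Qed.

Lemma transition_P0_on1 : transition P0 1 1 P0_on1.
Proof. by apply: transitionW; vm_compute. Qed.

Theorem proposition8p4 :
  ~ coherent_IIA_VCCR scwc /\ ~ coherent_IIA_VSCC scwc_bar.
Proof.
split.
  move/(_ P0 P1 0%N 1%N (or_intror wc_P0) transition_P0_P1).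
  exact: not_scwc_P1.
apply: (@not_coherent_IIA_VSCC _ P0 1) => //.
  by case=> _; apply; exists 0%N; right; apply: wc_P0.
move=> x; rewrite !inE => /or4P[] /eqP->.
- by exists P1; [apply: transition_P0_P1 | apply: scwc_bar_P1].
- by exists P0_on1; [apply: transition_P0_on1 | apply: scwc_bar_P0_on1].
- by exists P0_on123; [apply: transition_P0_on123 | apply: scwc_bar_P0_on123].
- by exists P0_on13; [apply: transition_P0_on13 | apply: scwc_bar_P0_on13].
Qed.
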